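(* For every $(w_1,w_2)\in\mathcal{A}$ the equation $f(X):=X-f_1(f_2(X))=0$ admits a unique positive solution $X_0$. Consequently, setting $e^{c_1}=X_0$ and $e^{c_2}=f_2(X_0)$, the pair $v_i=w_i+c_i$ ($i=1,2$) satisfies $$(N-1+\kappa)\int_\Omega e^{2u_1^0+2v_1}-N\int_\Omega e^{u_1^0+v_1}-(\kappa-1)\int_\Omega e^{u_1^0+u_2^0+v_1+v_2}+\frac{b_1}{\lambda}=0,$$ $$\Big(\frac1{N-1}+\kappa\Big)\int_\Omega e^{2u_2^0+2v_2}-\frac N{N-1}\int_\Omega e^{u_2^0+v_2}-(\kappa-1)\int_\Omega e^{u_1^0+u_2^0+v_1+v_2}+\frac{b_2}{\lambda}=0.$$
   Context: Standing setting (doubly periodic case): $N\ge2$ integer, $\kappa>1$, $\lambda>0$; $\Omega$ a doubly periodic domain (flat torus) of area $|\Omega|$; integers $n_1,n_2\ge0$ and points $p_{is}\in\Omega$. $W^{1,2}(\Omega)$ = $\Omega$-periodic $L^2$ functions with $L^2$ gradient, $\dot W^{1,2}(\Omega)=\{w\in W^{1,2}(\Omega):\int_\Omega w=0\}$. $u_i^0$ solves $\Delta u_i^0=4\pi\sum_{s=1}^{n_i}\delta_{p_{is}}-\frac{4\pi n_i}{|\Omega|}$, $\int_\Omega u_i^0=0$. Set $b_1=\frac{4\pi((1+(N-1)\kappa)n_1+(\kappa-1)n_2)}{\kappa}$, $b_2=\frac{4\pi((N-1)(\kappa-1)n_1+(N-1+\kappa)n_2)}{(N-1)\kappa}$. The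 admissible set $\mathcal A$ is the set of $(w_1,w_2)\in\dot W^{1,2}(\Omega)\times\dot W^{1,2}(\Omega)$ with $$\Big(\int_\Omega e^{u_1^0+w_1}\Big)^2\ge\frac{4(N-1+\kappa)b_1}{N^2\lambda}\int_\Omega e^{2u_1^0+2w_1},\qquad \Big(\int_\Omega e^{u_2^0+w_2}\Big)^2\ge\frac{4(N-1)(1+(N-1)\kappa)b_2}{N^2\lambda}\int_\Omega e^{2u_2^0+2w_2}.$$ For $(w_1,w_2)\in\mathcal A$ and $X,Y\ge0$ let $E_{12}=\int_\Omega e^{u_1^0+u_2^0+w_1+w_2}$, $P_1(Y)=N\int_\Omega e^{u_1^0+w_1}+(\kappa-1)YE_{12}$, $P_2(X)=\frac N{N-1}\int_\Omega e^{u_2^0+w_2}+(\kappa-1)XE_{12}$, $$f_1(Y)=\frac{P_1(Y)+\sqrt{P_1(Y)^2-\frac{4(N-1+\kappa)b_1}{\lambda}\int_\Omega e^{2u_1^0+2w_1}}}{2(N-1+\kappa)\int_\Omega e^{2u_1^0+2w_1}},\quad f_2(X)=\frac{P_2(X)+\sqrt{P_2(X)^2-\frac{4(1+(N-1)\kappa)b_2}{(N-1)\lambda}\int_\Omega e^{2u_2^0+2w_2}}}{2\big(\frac1{N-1}+\kappa\big)\int_\Omega e^{2u_2^0+2w_2}}.$$ *)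

From Stdlib Require Import Reals.
Open Scope R_scope.

(* An abstract integral over the (periodic) domain Omega, represented by a type
   [T] of points and a functional [I] on real functions: linear, monotone, and
   strictly positive on strictly positive functions (as the Lebesgue integral
   over a flat torus of positive area is, on the exponential-type integrands
   occurring here). *)
Definition is_integral {T : Type} (I : (T -> R) -> R) : Prop :=
  (forall f g : T -> R, I (fun x => f x + g x) = I f + I g) /\
  (forall (c : R) (f : T -> R), I (fun x => c * f x) = c * I f) /\
  (forall f g : T -> R, (forall x, f x <= g x) -> I f <= I g) /\
  (forall f : T -> R, (forall x, 0 < f x) -> 0 < I f).

Definition b1 (N : nat) (kappa : R) (n1 n2 : nat) : R :=
  4 * PI * ((1 + (INR N - 1) * kappa) * INR n1 + (kappa - 1) * INR n2) / kappa.

Definition b2 (N : nat) (kappa : R) (n1 n2 : nat) : R :=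
  4 * PI * ((INR N - 1) * (kappa - 1) * INR n1 + (INR N - 1 + kappa) * INR n2)
  / ((INR N - 1) * kappa).

Section Fns.
Context {T : Type} (I : (T -> R) -> R) (N : nat) (kappa lambda : R) (n1 n2 : nat)
        (u1 u2 w1 w2 : T -> R).

Definition admissible : Prop :=
  I w1 = 0 /\ I w2 = 0 /\
  (I (fun x => exp (u1 x + w1 x))) ^ 2 >=
    4 * (INR N - 1 + kappa) * b1 N kappa n1 n2 / (INR N ^ 2 * lambda)
      * I (fun x => exp (2 * u1 x + 2 * w1 x)) /\
  (I (fun x => exp (u2 x + w2 x))) ^ 2 >=
    4 * (INR N - 1) * (1 + (INR N - 1) * kappa) * b2 N kappa n1 n2 / (INR N ^ 2 * lambda)
      * I (fun x => exp (2 * u2 x + 2 * w2 x)).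

Definition E12 : R := I (fun x => exp (u1 x + u2 x + w1 x + w2 x)).

Definition P1 (Y : R) : R := INR N * I (fun x => exp (u1 x + w1 x)) + (kappa - 1) * Y * E12.

Definition P2 (X : R) : R :=
  INR N / (INR N - 1) * I (fun x => exp (u2 x + w2 x)) + (kappa - 1) * X * E12.

Definition f1 (Y : R) : R :=
  (P1 Y + sqrt (P1 Y ^ 2 - 4 * (INR N - 1 + kappa) * b1 N kappa n1 n2 / lambda
                              * I (fun x => exp (2 * u1 x + 2 * w1 x))))
  / (2 * (INR N - 1 + kappa) * I (fun x => exp (2 * u1 x + 2 * w1 x))).

Definition f2 (X : R) : R :=
  (P2 X + sqrt (P2 X ^ 2 - 4 * (1 + (INR N - 1) * kappa) * b2 N kappa n1 n2
                              / ((INR N - 1) * lambda)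
                              * I (fun x => exp (2 * u2 x + 2 * w2 x))))
  / (2 * (1 / (INR N - 1) + kappa) * I (fun x => exp (2 * u2 x + 2 * w2 x))).

End Fns.

(* Idea.  [f1 Y] is the larger root of [a1 X^2 - (p1 + q Y) X + beta1 = 0] and [f2 X] the
   larger root of [a2 Y^2 - (p2 + q X) Y + beta2 = 0].  Such a "root map"
   [y |-> larger_root a beta (p + q y)] is, on [0, +oo), positive, nondecreasing, concave
   (because [P |-> sqrt (P^2 - D)] is concave), continuous, and bounded by [(p + q y) / a].
   Hence [h = f1 o f2] is concave with [h 0 > 0], which allows at most one positive fixed
   point, and when [q^2 < a1 a2] it eventually drops below the diagonal, so the
   intermediate value theorem yields one.  The inequality [q^2 < a1 a2] comes from
   Cauchy-Schwarz, [E12^2 <= B1 B2]; admissibility of [(w1, w2)] is exactly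
   nonnegativity of the discriminants.  Finally, shifting [w_i] by [c_i] rescales each
   integral by a power of [e^c1], [e^c2], turning the two residuals into the quadratics. *)

From Stdlib Require Import Reals Lra Lia Psatz Ranalysis5.
Open Scope R_scope.

Definition larger_root (a beta P : R) : R := (P + sqrt (P ^ 2 - 4 * a * beta)) / (2 * a).

Lemma sqrt_disc_concave D P Q t :
  0 <= D -> D <= P ^ 2 -> D <= Q ^ 2 -> 0 <= P -> 0 <= Q -> 0 <= t <= 1 ->
  (1 - t) * sqrt (P ^ 2 - D) + t * sqrt (Q ^ 2 - D) <= sqrt (((1 - t) * P + t * Q) ^ 2 - D).
Proof.
  intros HD HP HQ P0 Q0 Ht.
  pose proof (sqrt_pos (P ^ 2 - D)) as s0; pose proof (sqrt_pos (Q ^ 2 - D)) as r0.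
  pose proof (sqrt_sqrt (P ^ 2 - D) ltac:(lra)) as ss.
  pose proof (sqrt_sqrt (Q ^ 2 - D) ltac:(lra)) as rr.
  set (s := sqrt (P ^ 2 - D)) in *; set (r := sqrt (Q ^ 2 - D)) in *.
  assert (PQ_D : D <= P * Q).
  { assert (D * D <= P ^ 2 * Q ^ 2) by (apply Rmult_le_compat; lra).
    assert (0 <= P * Q) by nra. nra. }
  assert (sr_le : s * r <= P * Q - D).
  { assert ((s * r) ^ 2 <= (P * Q - D) ^ 2).
    { replace ((s * r) ^ 2) with ((s * s) * (r * r)) by ring. rewrite ss, rr.
      pose proof (Rmult_le_pos D ((P - Q) ^ 2) HD (pow2_ge_0 _)). nra. }
    nra. }
  rewrite <- (sqrt_pow2 ((1 - t) * s + t * r)) by nra.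
  apply sqrt_le_1_alt.
  assert (0 <= t * (1 - t) * (P * Q - D - s * r)) by (apply Rmult_le_pos; nra).
  replace (((1 - t) * P + t * Q) ^ 2 - D) with
    (((1 - t) * s + t * r) ^ 2 + 2 * (t * (1 - t) * (P * Q - D - s * r))
     + (1 - t) ^ 2 * (P ^ 2 - D - s * s) + t ^ 2 * (Q ^ 2 - D - r * r)) by ring.
  rewrite ss, rr. lra.
Qed.

Lemma larger_root_quadratic a beta P :
  0 < a -> 4 * a * beta <= P ^ 2 ->
  a * larger_root a beta P ^ 2 - P * larger_root a beta P + beta = 0.
Proof.
  intros Ha Hdisc. unfold larger_root.
  pose proof (sqrt_sqrt (P ^ 2 - 4 * a * beta) ltac:(lra)) as ss.
  set (s := sqrt (P ^ 2 - 4 * a * beta)) in *.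
  replace (a * ((P + s) / (2 * a)) ^ 2 - P * ((P + s) / (2 * a)) + beta)
    with ((s * s - (P ^ 2 - 4 * a * beta)) / (4 * a)) by (field; lra).
  rewrite ss. field. lra.
Qed.

Definition concave_nonneg (h : R -> R) : Prop :=
  forall x y t, 0 <= x -> 0 <= y -> 0 <= t <= 1 ->
  (1 - t) * h x + t * h y <= h ((1 - t) * x + t * y).

Definition root_data (a beta p q : R) : Prop :=
  0 < a /\ 0 <= beta /\ 0 < p /\ 0 <= q /\ 4 * a * beta <= p ^ 2.

Section RootMap.
Variables a beta p q : R.
Hypothesis Hdata : root_data a beta p q.

Let Ha : 0 < a := proj1 Hdata.
Let Hbeta : 0 <= beta := proj1 (proj2 Hdata).
Let Hp : 0 < p := proj1 (proj2 (proj2 Hdata)).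
Let Hq : 0 <= q := proj1 (proj2 (proj2 (proj2 Hdata))).
Let Hdisc : 4 * a * beta <= p ^ 2 := proj2 (proj2 (proj2 (proj2 Hdata))).

Definition root_map (y : R) : R := larger_root a beta (p + q * y).

Lemma disc_nonneg : 0 <= 4 * a * beta.
Proof. apply Rmult_le_pos; lra. Qed.

Lemma root_map_disc y : 0 <= y -> 4 * a * beta <= (p + q * y) ^ 2.
Proof. intros Hy. pose proof (Rmult_le_pos q y Hq Hy). nra. Qed.

Lemma root_map_pos y : 0 <= y -> 0 < root_map y.
Proof.
  intros Hy. unfold root_map, larger_root.
  pose proof (sqrt_pos ((p + q * y) ^ 2 - 4 * a * beta)).
  pose proof (Rmult_le_pos q y Hq Hy).
  apply Rdiv_lt_0_compat; lra.
Qed.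

Lemma root_map_mono y z : 0 <= y -> y <= z -> root_map y <= root_map z.
Proof.
  intros Hy Hyz. unfold root_map, larger_root.
  pose proof (Rmult_le_pos q y Hq Hy).
  assert (q * y <= q * z) by (apply Rmult_le_compat_l; lra).
  assert (sqrt ((p + q * y) ^ 2 - 4 * a * beta) <= sqrt ((p + q * z) ^ 2 - 4 * a * beta))
    by (apply sqrt_le_1_alt; nra).
  apply Rmult_le_compat_r; [left; apply Rinv_0_lt_compat|]; lra.
Qed.

(* The larger root never exceeds [P / a], the root of [a x^2 - P x] *)
Lemma root_map_le y : 0 <= y -> root_map y <= (p + q * y) / a.
Proof.
  intros Hy. unfold root_map, larger_root.
  pose proof (Rmult_le_pos q y Hq Hy).
  assert (sqrt ((p + q * y) ^ 2 - 4 * a * beta) <= p + q * y).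
  { rewrite <- (sqrt_pow2 (p + q * y)) at 2 by lra.
    apply sqrt_le_1_alt. pose proof disc_nonneg. lra. }
  apply (Rmult_le_reg_r (2 * a)); [lra|].
  replace ((p + q * y) / a * (2 * a)) with (2 * (p + q * y)) by (field; lra).
  replace ((p + q * y + sqrt ((p + q * y) ^ 2 - 4 * a * beta)) / (2 * a) * (2 * a))
    with (p + q * y + sqrt ((p + q * y) ^ 2 - 4 * a * beta)) by (field; lra).
  lra.
Qed.

Lemma root_map_concave : concave_nonneg root_map.
Proof.
  intros y z t Hy Hz Ht. unfold root_map, larger_root.
  replace (p + q * ((1 - t) * y + t * z)) with ((1 - t) * (p + q * y) + t * (p + q * z)) by ring.
  pose proof (Rmult_le_pos q y Hq Hy). pose proof (Rmult_le_pos q z Hq Hz).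
  pose proof (sqrt_disc_concave (4 * a * beta) (p + q * y) (p + q * z) t
                disc_nonneg (root_map_disc y Hy) (root_map_disc z Hz) ltac:(lra) ltac:(lra) Ht).
  set (P1 := p + q * y) in *; set (P2 := p + q * z) in *.
  replace ((1 - t) * ((P1 + sqrt (P1 ^ 2 - 4 * a * beta)) / (2 * a))
           + t * ((P2 + sqrt (P2 ^ 2 - 4 * a * beta)) / (2 * a)))
    with (((1 - t) * P1 + t * P2
           + ((1 - t) * sqrt (P1 ^ 2 - 4 * a * beta) + t * sqrt (P2 ^ 2 - 4 * a * beta)))
          / (2 * a)) by (field; lra).
  apply Rmult_le_compat_r; [left; apply Rinv_0_lt_compat|]; lra.
Qed.

Lemma root_map_quadratic y :
  0 <= y -> a * root_map y ^ 2 - (p + q * y) * root_map y + beta = 0.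
Proof. intros Hy. apply larger_root_quadratic; [exact Ha | exact (root_map_disc y Hy)]. Qed.

Lemma root_map_continuous y : 0 <= y -> continuity_pt root_map y.
Proof.
  intros Hy. unfold root_map, larger_root.
  pose proof (root_map_disc y Hy).
  reg. lra.
Qed.
End RootMap.

(* A concave self-map of [0, +oo) that is positive at 0 has at most one positive fixed
   point: between two of them the chord from (0, h 0) would lie strictly above h. *)
Lemma concave_fixed_point_unique (h : R -> R) x1 x2 :
  concave_nonneg h -> 0 < h 0 -> 0 < x1 -> 0 < x2 ->
  h x1 = x1 -> h x2 = x2 -> x1 = x2.
Proof.
  intros Hconc H0 Hx1 Hx2 E1 E2.
  assert (strict : forall y z, 0 < y < z -> h y = y -> h z = z -> False).
  { intros y z [Hy Hyz] Ey Ez.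
    set (t := y / z).
    assert (Ht : 0 < t < 1).
    { unfold t; split; [apply Rdiv_lt_0_compat; lra|].
      apply (Rmult_lt_reg_r z); [lra|]. unfold Rdiv. rewrite Rmult_assoc, Rinv_l; lra. }
    assert (Hy_chord : (1 - t) * 0 + t * z = y) by (unfold t; field; lra).
    pose proof (Hconc 0 z t (Rle_refl 0) ltac:(lra) ltac:(lra)) as Hc.
    rewrite Hy_chord, Ey, Ez in Hc.
    pose proof (Rmult_lt_0_compat (1 - t) (h 0) ltac:(lra) H0). nra. }
  destruct (Rtotal_order x1 x2) as [lt | [eq | gt]]; [exfalso | exact eq | exfalso].
  - exact (strict x1 x2 (conj Hx1 lt) E1 E2).
  - exact (strict x2 x1 (conj Hx2 gt) E2 E1).
Qed.

Lemma fixed_point_exists (h : R -> R) M :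
  0 < M -> (forall x, 0 <= x <= M -> continuity_pt h x) -> 0 < h 0 -> h M < M ->
  exists x, 0 < x /\ h x = x.
Proof.
  intros HM Hcont H0 HMlt.
  destruct (IVT_interv (fun x => x - h x) 0 M) as [x [Hx Hfx]]; try lra.
  - intros y Hy. apply continuity_pt_minus; [apply derivable_continuous_pt, derivable_pt_id | exact (Hcont y Hy)].
  - exists x. split; [|lra].
    destruct (Req_dec x 0) as [->|]; lra.
Qed.

Lemma concave_comp (g1 g2 : R -> R) :
  concave_nonneg g1 -> concave_nonneg g2 ->
  (forall y z, 0 <= y -> y <= z -> g1 y <= g1 z) -> (forall y, 0 <= y -> 0 <= g2 y) ->
  concave_nonneg (fun x => g1 (g2 x)).
Proof.
  intros C1 C2 M1 P2 x y t Hx Hy Ht.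
  apply Rle_trans with (g1 ((1 - t) * g2 x + t * g2 y)).
  - exact (C1 (g2 x) (g2 y) t (P2 x Hx) (P2 y Hy) Ht).
  - apply M1; [|exact (C2 x y t Hx Hy Ht)].
    pose proof (Rmult_le_pos (1 - t) (g2 x) ltac:(lra) (P2 x Hx)).
    pose proof (Rmult_le_pos t (g2 y) ltac:(lra) (P2 y Hy)). lra.
Qed.

Section RootMapPair.
Variables a1 beta1 p1 q1 a2 beta2 p2 q2 : R.
Hypotheses (D1 : root_data a1 beta1 p1 q1) (D2 : root_data a2 beta2 p2 q2)
           (Hcoupling : q1 * q2 < a1 * a2).

Let g1 := root_map a1 beta1 p1 q1.
Let g2 := root_map a2 beta2 p2 q2.

(* Both root maps grow at most linearly, with slopes whose product [q1 q2 / (a1 a2)]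
   is below 1, so the composite eventually falls below the diagonal. *)
Lemma root_map_pair_below_diagonal : exists M, 0 < M /\ g1 (g2 M) < M.
Proof.
  pose proof D1 as (Ha1 & _ & Hp1 & Hq1 & _); pose proof D2 as (Ha2 & _ & Hp2 & Hq2 & _).
  set (M := (p1 * a2 + q1 * p2 + 1) / (a1 * a2 - q1 * q2)).
  assert (HM : 0 < M) by (apply Rdiv_lt_0_compat; nra).
  assert (HMeq : M * (a1 * a2 - q1 * q2) = p1 * a2 + q1 * p2 + 1) by (unfold M; field; lra).
  exists M; split; [exact HM|].
  pose proof (root_map_le a2 beta2 p2 q2 D2 M ltac:(lra)) as bound2.
  pose proof (root_map_pos a2 beta2 p2 q2 D2 M ltac:(lra)) as pos2.
  fold g2 in bound2, pos2.
  pose proof (root_map_le a1 beta1 p1 q1 D1 (g2 M) ltac:(lra)) as bound1.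
  fold g1 g2 in bound1.
  apply Rle_lt_trans with ((p1 + q1 * g2 M) / a1); [exact bound1|].
  apply (Rmult_lt_reg_r (a1 * a2)); [nra|].
  replace ((p1 + q1 * g2 M) / a1 * (a1 * a2)) with (p1 * a2 + q1 * (a2 * g2 M)) by (field; lra).
  assert (a2 * g2 M <= p2 + q2 * M).
  { apply (Rmult_le_reg_r (/ a2)); [apply Rinv_0_lt_compat; lra|].
    replace (a2 * g2 M * / a2) with (g2 M) by (field; lra). exact bound2. }
  assert (q1 * (a2 * g2 M) <= q1 * (p2 + q2 * M)) by (apply Rmult_le_compat_l; lra).
  nra.
Qed.

Lemma root_map_pair_unique_fixed_point (h : R -> R) :
  (forall X, h X = g1 (g2 X)) -> exists! X, 0 < X /\ X - h X = 0.
Proof.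
  intros Hh.
  assert (Hconc : concave_nonneg (fun X => g1 (g2 X))).
  { apply concave_comp.
    - exact (root_map_concave a1 beta1 p1 q1 D1).
    - exact (root_map_concave a2 beta2 p2 q2 D2).
    - exact (root_map_mono a1 beta1 p1 q1 D1).
    - intros y Hy. left. exact (root_map_pos a2 beta2 p2 q2 D2 y Hy). }
  assert (Hpos2 : forall y, 0 <= y -> 0 < g2 y)
    by exact (root_map_pos a2 beta2 p2 q2 D2).
  assert (H0 : 0 < g1 (g2 0))
    by (apply (root_map_pos a1 beta1 p1 q1 D1); left; apply Hpos2; lra).
  destruct root_map_pair_below_diagonal as [M [HM HMlt]].
  destruct (fixed_point_exists (fun X => g1 (g2 X)) M HM) as [X [HX EX]]; auto.
  { intros x Hx. apply continuity_pt_comp with (f2 := g1) (f1 := g2).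
    - exact (root_map_continuous a2 beta2 p2 q2 D2 x ltac:(lra)).
    - apply root_map_continuous; auto. left; apply Hpos2; lra. }
  exists X. split; [rewrite Hh; split; lra|].
  intros Y [HY EY]. rewrite Hh in EY. apply (concave_fixed_point_unique _ X Y Hconc H0 HX HY); lra.
Qed.
End RootMapPair.

Section Integral.
Context {T : Type} (I : (T -> R) -> R) (HI : is_integral I).

Lemma integral_ext (f g : T -> R) : (forall x, f x = g x) -> I f = I g.
Proof.
  destruct HI as (_ & _ & Hmono & _). intros Hfg.
  apply Rle_antisym; apply Hmono; intros x; rewrite Hfg; lra.
Qed.

Lemma integral_nonneg (f : T -> R) : (forall x, 0 <= f x) -> 0 <= I f.
Proof.
  destruct HI as (_ & Hscale & Hmono & _). intros Hf.
  assert (Hzero : I (fun _ => 0) = 0).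
  { rewrite (integral_ext (fun _ => 0) (fun x => 0 * (fun _ => 0) x)) by (intros; ring).
    rewrite Hscale. ring. }
  rewrite <- Hzero. apply Hmono. exact Hf.
Qed.

Lemma integral_exp_pos (e : T -> R) : 0 < I (fun x => exp (e x)).
Proof. destruct HI as (_ & _ & _ & Hpos). apply Hpos. intros x. apply exp_pos. Qed.

Lemma integral_exp_shift (e e' : T -> R) (s : R) :
  (forall x, e x = e' x + s) -> I (fun x => exp (e x)) = exp s * I (fun x => exp (e' x)).
Proof.
  destruct HI as (_ & Hscale & _). intros He. rewrite <- Hscale.
  apply integral_ext. intros x. rewrite He, exp_plus. ring.
Qed.

(* Cauchy-Schwarz for exponentials: the quadratic [t |-> I ((t e^a - e^b)^2)] is
   nonnegative, so its discriminant is nonpositive. *)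
Lemma integral_exp_cauchy_schwarz (a b : T -> R) :
  I (fun x => exp (a x + b x)) ^ 2 <= I (fun x => exp (2 * a x)) * I (fun x => exp (2 * b x)).
Proof.
  destruct HI as (Hadd & Hscale & _).
  set (E := I (fun x => exp (a x + b x))).
  set (Ba := I (fun x => exp (2 * a x))); set (Bb := I (fun x => exp (2 * b x))).
  assert (HBa : 0 < Ba) by apply integral_exp_pos.
  assert (Hquad : forall t, 0 <= t ^ 2 * Ba + (-2 * t * E + Bb)).
  { intros t. unfold Ba, E, Bb.
    rewrite <- !Hscale, <- !Hadd. apply integral_nonneg. intros x.
    replace (t ^ 2 * exp (2 * a x) + (-2 * t * exp (a x + b x) + exp (2 * b x)))
      with ((t * exp (a x) - exp (b x)) ^ 2) by
      (replace (2 * a x) with (a x + a x) by ring; replace (2 * b x) with (b x + b x) by ring;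
       rewrite !exp_plus; ring).
    apply pow2_ge_0. }
  specialize (Hquad (E / Ba)).
  replace ((E / Ba) ^ 2 * Ba + (-2 * (E / Ba) * E + Bb)) with (Bb - E ^ 2 / Ba) in Hquad
    by (field; lra).
  apply (Rmult_le_reg_r (/ Ba)); [apply Rinv_0_lt_compat; lra|].
  replace (Ba * Bb * / Ba) with Bb by (field; lra). unfold Rdiv in Hquad. lra.
Qed.
End Integral.

Section Model.
Variables (N : nat) (kappa lambda : R) (n1 n2 : nat) (T : Type) (I : (T -> R) -> R)
          (u1 u2 w1 w2 : T -> R).
Hypotheses (HN : (2 <= N)%nat) (Hkappa : 1 < kappa) (Hlambda : 0 < lambda)
           (HI : is_integral I).

Definition A1 : R := I (fun x => exp (u1 x + w1 x)).
Definition A2 : R := I (fun x => exp (u2 x + w2 x)).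
Definition B1 : R := I (fun x => exp (2 * u1 x + 2 * w1 x)).
Definition B2 : R := I (fun x => exp (2 * u2 x + 2 * w2 x)).

(* Coefficients exhibiting [f1], [f2] as root maps: [f1 Y] is the larger root of
   [a1 X^2 - (p1 + q Y) X + beta1 = 0], and [f2 X] that of
   [a2 Y^2 - (p2 + q X) Y + beta2 = 0]. *)
Definition a1 : R := (INR N - 1 + kappa) * B1.
Definition a2 : R := (1 / (INR N - 1) + kappa) * B2.
Definition beta1 : R := b1 N kappa n1 n2 / lambda.
Definition beta2 : R := b2 N kappa n1 n2 / lambda.
Definition p1 : R := INR N * A1.
Definition p2 : R := INR N / (INR N - 1) * A2.
Definition q : R := (kappa - 1) * E12 I u1 u2 w1 w2.

(* [N >= 2] is only used through [INR N - 1 > 0]. *)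
Lemma N_gt_1 : 1 < INR N.
Proof. replace 1 with (INR 1) by reflexivity. apply lt_INR. lia. Qed.

Lemma f1_root_map Y : f1 I N kappa lambda n1 n2 u1 u2 w1 w2 Y = root_map a1 beta1 p1 q Y.
Proof.
  unfold f1, root_map, larger_root, P1, a1, beta1, p1, q, A1, B1.
  replace (INR N * I (fun x => exp (u1 x + w1 x)) + (kappa - 1) * Y * E12 I u1 u2 w1 w2)
    with (INR N * I (fun x => exp (u1 x + w1 x)) + (kappa - 1) * E12 I u1 u2 w1 w2 * Y)
    by ring.
  f_equal; [do 3 f_equal | ]; field; lra.
Qed.

Lemma f2_root_map X : f2 I N kappa lambda n1 n2 u1 u2 w1 w2 X = root_map a2 beta2 p2 q X.
Proof.
  pose proof N_gt_1.
  unfold f2, root_map, larger_root, P2, a2, beta2, p2, q, A2, B2.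
  replace (INR N / (INR N - 1) * I (fun x => exp (u2 x + w2 x)) + (kappa - 1) * X * E12 I u1 u2 w1 w2)
    with (INR N / (INR N - 1) * I (fun x => exp (u2 x + w2 x)) + (kappa - 1) * E12 I u1 u2 w1 w2 * X)
    by ring.
  f_equal; [do 3 f_equal | ]; field; lra.
Qed.

Lemma b1_nonneg : 0 <= b1 N kappa n1 n2.
Proof.
  pose proof N_gt_1; pose proof PI_RGT_0; pose proof (pos_INR n1); pose proof (pos_INR n2).
  unfold b1, Rdiv. apply Rmult_le_pos; [|left; apply Rinv_0_lt_compat; lra].
  apply Rmult_le_pos; [lra|].
  apply Rplus_le_le_0_compat; apply Rmult_le_pos; nra.
Qed.

Lemma b2_nonneg : 0 <= b2 N kappa n1 n2.
Proof.
  pose proof N_gt_1; pose proof PI_RGT_0; pose proof (pos_INR n1); pose proof (pos_INR n2).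
  unfold b2, Rdiv. apply Rmult_le_pos; [|left; apply Rinv_0_lt_compat; nra].
  apply Rmult_le_pos; [lra|].
  apply Rplus_le_le_0_compat; apply Rmult_le_pos; nra.
Qed.

Lemma A1_pos : 0 < A1. Proof. exact (integral_exp_pos I HI _). Qed.
Lemma A2_pos : 0 < A2. Proof. exact (integral_exp_pos I HI _). Qed.
Lemma B1_pos : 0 < B1. Proof. exact (integral_exp_pos I HI _). Qed.
Lemma B2_pos : 0 < B2. Proof. exact (integral_exp_pos I HI _). Qed.
Lemma E12_pos : 0 < E12 I u1 u2 w1 w2. Proof. exact (integral_exp_pos I HI _). Qed.

Lemma q_nonneg : 0 <= q.
Proof. pose proof E12_pos. unfold q. apply Rmult_le_pos; lra. Qed.

Lemma E12_cauchy_schwarz : E12 I u1 u2 w1 w2 ^ 2 <= B1 * B2.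
Proof.
  pose proof (integral_exp_cauchy_schwarz I HI (fun x => u1 x + w1 x) (fun x => u2 x + w2 x))
    as Hcs.
  cbv beta in Hcs. unfold E12, B1, B2.
  rewrite (integral_ext I HI (fun x => exp (u1 x + w1 x + (u2 x + w2 x)))
             (fun x => exp (u1 x + u2 x + w1 x + w2 x)) ltac:(intros; cbv beta; f_equal; ring)),
          (integral_ext I HI (fun x => exp (2 * (u1 x + w1 x)))
             (fun x => exp (2 * u1 x + 2 * w1 x)) ltac:(intros; cbv beta; f_equal; ring)),
          (integral_ext I HI (fun x => exp (2 * (u2 x + w2 x)))
             (fun x => exp (2 * u2 x + 2 * w2 x)) ltac:(intros; cbv beta; f_equal; ring)) in Hcs.
  exact Hcs.
Qed.

(* Since [(kappa-1)^2 < (N-1+kappa)(1/(N-1)+kappa)], the coupling is weaker than the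
   product of the quadratic coefficients: [q^2 < a1 a2]. *)
Lemma coupling_small : q * q < a1 * a2.
Proof.
  pose proof N_gt_1; pose proof E12_cauchy_schwarz; pose proof E12_pos.
  pose proof B1_pos; pose proof B2_pos.
  assert (0 < 1 / (INR N - 1)) by (apply Rdiv_lt_0_compat; lra).
  assert (Hk : (kappa - 1) * (kappa - 1) < (INR N - 1 + kappa) * (1 / (INR N - 1) + kappa)).
  { assert (Hr : (INR N - 1) * (1 / (INR N - 1)) = 1) by (field; lra).
    pose proof (Rmult_lt_0_compat (INR N - 1) kappa ltac:(lra) ltac:(lra)).
    pose proof (Rmult_lt_0_compat kappa (1 / (INR N - 1)) ltac:(lra) ltac:(lra)).
    replace ((INR N - 1 + kappa) * (1 / (INR N - 1) + kappa))
      with ((INR N - 1) * (1 / (INR N - 1)) + (INR N - 1) * kappa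
            + kappa * (1 / (INR N - 1)) + kappa * kappa) by ring.
    nra. }
  assert ((kappa - 1) * (kappa - 1) * E12 I u1 u2 w1 w2 ^ 2 <= (kappa - 1) * (kappa - 1) * (B1 * B2))
    by (apply Rmult_le_compat_l; nra).
  pose proof (Rmult_lt_compat_r (B1 * B2) _ _ ltac:(nra) Hk).
  unfold q, a1, a2.
  replace ((kappa - 1) * E12 I u1 u2 w1 w2 * ((kappa - 1) * E12 I u1 u2 w1 w2))
    with ((kappa - 1) * (kappa - 1) * E12 I u1 u2 w1 w2 ^ 2) by ring.
  replace ((INR N - 1 + kappa) * B1 * ((1 / (INR N - 1) + kappa) * B2))
    with ((INR N - 1 + kappa) * (1 / (INR N - 1) + kappa) * (B1 * B2)) by ring.
  lra.
Qed.

Lemma residual1_shift c1 c2 :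
  (INR N - 1 + kappa) * I (fun x => exp (2 * u1 x + 2 * (w1 x + c1)))
    - INR N * I (fun x => exp (u1 x + (w1 x + c1)))
    - (kappa - 1) * I (fun x => exp (u1 x + u2 x + (w1 x + c1) + (w2 x + c2)))
    + b1 N kappa n1 n2 / lambda
  = a1 * exp c1 ^ 2 - (p1 + q * exp c2) * exp c1 + beta1.
Proof.
  rewrite (integral_exp_shift I HI (fun x => 2 * u1 x + 2 * (w1 x + c1))
             (fun x => 2 * u1 x + 2 * w1 x) (c1 + c1)) by (intros; ring).
  rewrite (integral_exp_shift I HI (fun x => u1 x + (w1 x + c1))
             (fun x => u1 x + w1 x) c1) by (intros; ring).
  rewrite (integral_exp_shift I HI (fun x => u1 x + u2 x + (w1 x + c1) + (w2 x + c2))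
             (fun x => u1 x + u2 x + w1 x + w2 x) (c1 + c2)) by (intros; ring).
  fold A1 B1 (E12 I u1 u2 w1 w2). rewrite !exp_plus.
  unfold a1, p1, q, beta1. ring.
Qed.

Lemma residual2_shift c1 c2 :
  (1 / (INR N - 1) + kappa) * I (fun x => exp (2 * u2 x + 2 * (w2 x + c2)))
    - INR N / (INR N - 1) * I (fun x => exp (u2 x + (w2 x + c2)))
    - (kappa - 1) * I (fun x => exp (u1 x + u2 x + (w1 x + c1) + (w2 x + c2)))
    + b2 N kappa n1 n2 / lambda
  = a2 * exp c2 ^ 2 - (p2 + q * exp c1) * exp c2 + beta2.
Proof.
  rewrite (integral_exp_shift I HI (fun x => 2 * u2 x + 2 * (w2 x + c2))
             (fun x => 2 * u2 x + 2 * w2 x) (c2 + c2)) by (intros; ring).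
  rewrite (integral_exp_shift I HI (fun x => u2 x + (w2 x + c2))
             (fun x => u2 x + w2 x) c2) by (intros; ring).
  rewrite (integral_exp_shift I HI (fun x => u1 x + u2 x + (w1 x + c1) + (w2 x + c2))
             (fun x => u1 x + u2 x + w1 x + w2 x) (c1 + c2)) by (intros; ring).
  fold A2 B2 (E12 I u1 u2 w1 w2). rewrite !exp_plus.
  unfold a2, p2, q, beta2. ring.
Qed.

Hypothesis Had : admissible I N kappa lambda n1 n2 u1 u2 w1 w2.

(* The two admissibility inequalities say exactly that the discriminants of both
   quadratics are nonnegative at [X = Y = 0], hence for all [X, Y >= 0]. *)
Lemma root_data1 : root_data a1 beta1 p1 q.
Proof.
  destruct Had as (_ & _ & Hadm1 & _). fold A1 B1 in Hadm1.
  pose proof N_gt_1; pose proof A1_pos; pose proof B1_pos; pose proof b1_nonneg.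
  unfold root_data, a1, beta1, p1.
  split; [nra | split; [unfold Rdiv; apply Rmult_le_pos; [|left; apply Rinv_0_lt_compat]; lra|]].
  split; [nra | split; [exact q_nonneg|]].
  replace (4 * ((INR N - 1 + kappa) * B1) * (b1 N kappa n1 n2 / lambda))
    with (INR N ^ 2 * (4 * (INR N - 1 + kappa) * b1 N kappa n1 n2 / (INR N ^ 2 * lambda) * B1))
    by (field; lra).
  replace ((INR N * A1) ^ 2) with (INR N ^ 2 * A1 ^ 2) by ring.
  apply Rmult_le_compat_l; nra.
Qed.

Lemma root_data2 : root_data a2 beta2 p2 q.
Proof.
  destruct Had as (_ & _ & _ & Hadm2). fold A2 B2 in Hadm2.
  pose proof N_gt_1; pose proof A2_pos; pose proof B2_pos; pose proof b2_nonneg.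
  assert (0 < 1 / (INR N - 1)) by (apply Rdiv_lt_0_compat; lra).
  unfold root_data, a2, beta2, p2.
  split; [nra | split; [unfold Rdiv; apply Rmult_le_pos; [|left; apply Rinv_0_lt_compat]; lra|]].
  split; [apply Rmult_lt_0_compat; [apply Rdiv_lt_0_compat|]; lra | split; [exact q_nonneg|]].
  replace (4 * ((1 / (INR N - 1) + kappa) * B2) * (b2 N kappa n1 n2 / lambda))
    with ((INR N / (INR N - 1)) ^ 2 * (4 * (INR N - 1) * (1 + (INR N - 1) * kappa)
           * b2 N kappa n1 n2 / (INR N ^ 2 * lambda) * B2))
    by (field; lra).
  replace ((INR N / (INR N - 1) * A2) ^ 2) with ((INR N / (INR N - 1)) ^ 2 * A2 ^ 2) by ring.
  apply Rmult_le_compat_l; [apply pow2_ge_0 | lra].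
Qed.

(* [f2] maps [0, +oo) to positive values, so [ln (f2 X0)] is meaningful. *)
Lemma f2_pos X : 0 <= X -> 0 < f2 I N kappa lambda n1 n2 u1 u2 w1 w2 X.
Proof. intros HX. rewrite f2_root_map. exact (root_map_pos _ _ _ _ root_data2 X HX). Qed.

Lemma fixed_point_unique :
  exists! X0, 0 < X0 /\
    X0 - f1 I N kappa lambda n1 n2 u1 u2 w1 w2 (f2 I N kappa lambda n1 n2 u1 u2 w1 w2 X0) = 0.
Proof.
  apply (root_map_pair_unique_fixed_point _ _ _ _ _ _ _ _ root_data1 root_data2 coupling_small).
  intros X. rewrite f2_root_map, f1_root_map. reflexivity.
Qed.

Lemma fixed_point_quadratics X0 :
  0 < X0 ->
  X0 - f1 I N kappa lambda n1 n2 u1 u2 w1 w2 (f2 I N kappa lambda n1 n2 u1 u2 w1 w2 X0) = 0 ->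
  a1 * X0 ^ 2 - (p1 + q * f2 I N kappa lambda n1 n2 u1 u2 w1 w2 X0) * X0 + beta1 = 0 /\
  a2 * f2 I N kappa lambda n1 n2 u1 u2 w1 w2 X0 ^ 2
    - (p2 + q * X0) * f2 I N kappa lambda n1 n2 u1 u2 w1 w2 X0 + beta2 = 0.
Proof.
  intros HX0 Hfix. rewrite f2_root_map in *. rewrite f1_root_map in Hfix.
  set (Y0 := root_map a2 beta2 p2 q X0) in *.
  assert (HY0 : 0 < Y0) by exact (root_map_pos _ _ _ _ root_data2 X0 ltac:(lra)).
  split.
  - replace X0 with (root_map a1 beta1 p1 q Y0) by lra.
    exact (root_map_quadratic _ _ _ _ root_data1 Y0 ltac:(lra)).
  - exact (root_map_quadratic _ _ _ _ root_data2 X0 ltac:(lra)).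
Qed.
End Model.

Theorem proposition1 (N : nat) (kappa lambda : R) (n1 n2 : nat)
  (T : Type) (I : (T -> R) -> R) (u1 u2 w1 w2 : T -> R) :
  (2 <= N)%nat -> 1 < kappa -> 0 < lambda ->
  is_integral I ->
  admissible I N kappa lambda n1 n2 u1 u2 w1 w2 ->
  (exists! X0 : R, 0 < X0 /\
     X0 - f1 I N kappa lambda n1 n2 u1 u2 w1 w2 (f2 I N kappa lambda n1 n2 u1 u2 w1 w2 X0) = 0)
  /\
  (forall X0 : R, 0 < X0 ->
     X0 - f1 I N kappa lambda n1 n2 u1 u2 w1 w2 (f2 I N kappa lambda n1 n2 u1 u2 w1 w2 X0) = 0 ->
     let c1 := ln X0 in
     let c2 := ln (f2 I N kappa lambda n1 n2 u1 u2 w1 w2 X0) in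
     let v1 := fun x => w1 x + c1 in
     let v2 := fun x => w2 x + c2 in
     (INR N - 1 + kappa) * I (fun x => exp (2 * u1 x + 2 * v1 x))
       - INR N * I (fun x => exp (u1 x + v1 x))
       - (kappa - 1) * I (fun x => exp (u1 x + u2 x + v1 x + v2 x))
       + b1 N kappa n1 n2 / lambda = 0 /\
     (1 / (INR N - 1) + kappa) * I (fun x => exp (2 * u2 x + 2 * v2 x))
       - INR N / (INR N - 1) * I (fun x => exp (u2 x + v2 x))
       - (kappa - 1) * I (fun x => exp (u1 x + u2 x + v1 x + v2 x))
       + b2 N kappa n1 n2 / lambda = 0).
Proof.
  intros HN Hkappa Hlambda HI Had. split.
  - apply fixed_point_unique; assumption.
  - intros X0 HX0 Hfix. cbv beta zeta.
    assert (HY0 : 0 < f2 I N kappa lambda n1 n2 u1 u2 w1 w2 X0)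
      by (apply f2_pos; auto; lra).
    rewrite residual1_shift, residual2_shift, !exp_ln by assumption.
    apply fixed_point_quadratics; assumption.
Qed.
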